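(* Let $\varphi\colon M\rightarrow N$ be a homomorphism of monoids with $M$ finitely generated and $N$ finite. Then the kernel category $K_{\varphi}$ is finitely generated (as a category).
   Context: Composition in categories is written diagrammatically ($fg$ means first $f$ then $g$). The kernel category $K_{\varphi}$ of a monoid homomorphism $\varphi\colon M\to N$ is the small category with object set $N\times N$, whose arrows are equivalence classes $[n_1,m,n_2]$ of triples $(n_1,m,n_2)\in N\times M\times N$, with $[n_1,m,n_2]\colon (n_1,\varphi(m)n_2)\rightarrow (n_1\varphi(m),n_2)$; two triples $(n_1,m,n_2)$ and $(n_1,m',n_2)$ are identified if $n_1\varphi(m)=n_1\varphi(m')$, $\varphi(m)n_2=\varphi(m')n_2$, and $m_1mm_2=m_1m'm_2$ for all $m_1\in\varphi^{-1}(n_1)$, $m_2\in\varphi^{-1}(n_2)$. Composition is $[n_1,m,\varphi(m')n_2][n_1\varphi(m),m',n_2]=[n_1,mm',n_2]$, and the identity at $(n_1,n_2)$ is $[n_1,1,n_2]$. A category is finitely generated if there is a finite set of arrows such that every arrow is a composite of these arrows and identities. *)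

From HB Require Import structures.
From mathcomp Require Import all_boot.
From Stdlib Require List.
Set Implicit Arguments. Unset Strict Implicit. Unset Printing Implicit Defensive.
Local Open Scope group_scope.

Inductive in_submonoid (M : monoidType) (gens : seq M) : M -> Prop :=
  | sm_one : in_submonoid gens 1
  | sm_gen : forall g, List.In g gens -> in_submonoid gens g
  | sm_mul : forall x y, in_submonoid gens x -> in_submonoid gens y ->
               in_submonoid gens (x * y).

Definition monoid_fin_gen (M : monoidType) : Prop :=
  exists gens : seq M, forall m : M, in_submonoid gens m.

Definition monoid_finite (N : monoidType) : Prop :=
  exists l : seq N, forall n : N, List.In n l.

(* Kernel category K_phi.  Objects: N * N.  An arrow is the class of a
   triple (n1, m, n2) : N * M * N, going from (n1, phi m * n2) to
   (n1 * phi m, n2).  Composition is written diagrammatically. *)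
Section Kernel.
Variables (M N : monoidType) (phi : M -> N).

Definition ktriple := (N * M * N)%type.

Definition kdom (t : ktriple) : N * N :=
  let: (n1, m, n2) := t in (n1, phi m * n2).
Definition kcod (t : ktriple) : N * N :=
  let: (n1, m, n2) := t in (n1 * phi m, n2).

Definition kequiv (t t' : ktriple) : Prop :=
  let: (n1, m, n2) := t in
  let: (n1', m', n2') := t' in
  [/\ n1 = n1', n2 = n2',
      n1 * phi m = n1 * phi m',
      phi m * n2 = phi m' * n2 &
      forall m1 m2 : M, phi m1 = n1 -> phi m2 = n2 -> m1 * m * m2 = m1 * m' * m2].

Definition kid (n1 n2 : N) : ktriple := (n1, 1, n2).

Inductive kgenerated (S : seq ktriple) : ktriple -> Prop :=
  | kg_id : forall n1 n2, kgenerated S (kid n1 n2)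
  | kg_gen : forall s, List.In s S -> kgenerated S s
  | kg_comp : forall n1 m m' n2,
      kgenerated S (n1, m, phi m' * n2) ->
      kgenerated S (n1 * phi m, m', n2) ->
      kgenerated S (n1, m * m', n2)
  | kg_equiv : forall t t', kgenerated S t -> kequiv t t' -> kgenerated S t'.

Definition kernel_cat_fin_gen : Prop :=
  exists S : seq ktriple, forall t : ktriple, kgenerated S t.

End Kernel.

From HB Require Import structures.
From mathcomp Require Import all_boot.
From Stdlib Require List.

Set Implicit Arguments.
Unset Strict Implicit.
Unset Printing Implicit Defensive.

(* Every element of M is a product of generators, and the arrow [n1, g1 ... gk, n2]
   is the composite of the arrows [n1 phi(g1 ... g(i-1)), gi, phi(g(i+1) ... gk) n2].
   Since N is finite there are only finitely many arrows [a, g, b] with g a generator. *)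

Section KernelGenerators.
Variables (M N : monoidType) (phi : M -> N).

Definition kgen_triples (gens : seq M) (objs : seq N) : seq (ktriple M N) :=
  List.flat_map (fun a => List.flat_map
    (fun g => List.map (fun b => (a, g, b)) objs) gens) objs.

Lemma in_kgen_triples gens objs a g b :
  List.In a objs -> List.In g gens -> List.In b objs ->
  List.In (a, g, b) (kgen_triples gens objs).
Proof.
move=> Ha Hg Hb; apply/List.in_flat_map; exists a; split=> //.
by apply/List.in_flat_map; exists g; split=> //; apply/List.in_map.
Qed.

Lemma kgenerated_submonoid (S : seq (ktriple M N)) (gens : seq M) m :
  (forall n1 g n2, List.In g gens -> List.In (n1, g, n2) S) ->
  in_submonoid gens m -> forall n1 n2, kgenerated phi S (n1, m, n2).
Proof.
move=> genS; elim=> [|g Hg|x y _ IHx _ IHy] n1 n2.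
- exact: kg_id.
- exact/kg_gen/genS.
- exact: kg_comp (IHx _ _) (IHy _ _).
Qed.

End KernelGenerators.

Theorem proposition2p3 (M N : monoidType) (phi : M -> N) :
  monoid_morphism phi ->
  monoid_fin_gen M ->
  monoid_finite N ->
  kernel_cat_fin_gen phi.
Proof.
move=> _ [gens genM] [objs finN].
exists (kgen_triples gens objs); case=> [[n1 m] n2].
apply: kgenerated_submonoid (genM m) n1 n2 => a g b Hg.
exact: in_kgen_triples.
Qed.
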